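(* Let $F\in(k[\bar v,\bar w])^e$ satisfy $F(\bar v,\bar 0)=\bar v$ and $F(\bar 0,\bar w)=\bar w$, and let $\mathbb D=(D_{\mathbf i})$ and $\mathbb D'=(D'_{\mathbf i})$ be two $F$-derivations on the same $k$-algebra $R$. If for every $l\in\{1,\dots,e\}$ and every integer $0\le i<m$ we have $D_{p^i\varepsilon_l}=D'_{p^i\varepsilon_l}$, where $\varepsilon_l$ is the $l$-th unit vector of $\mathbb N^e$, then $\mathbb D=\mathbb D'$.
   Context: $k$ is a field of characteristic $p>0$; rings are commutative with $1$; $e\in\mathbb N_{>0}$, $m\in\mathbb N_{>0}\cup\{\infty\}$. For a $k$-algebra $R$, $R[\bar v]:=R[X_1,\dots,X_e]/(X_1^{p^m},\dots,X_e^{p^m})$ ($R[[\bar X]]$ if $m=\infty$), $v_i$ the image of $X_i$; similarly $R[\bar v,\bar w]$ with a second $e$-tuple $\bar w$ of $m$-truncated variables. $[p^m]=\{0,\dots,p^m-1\}$ ($\mathbb N$ if $m=\infty$), $\bar v^{\mathbf i}=v_1^{i_1}\cdots v_e^{i_e}$. An $m$-truncated $e$-dimensional HS-derivation on $R$ over $k$ is a family $(D_{\mathbf i}:R\to R)_{\mathbf i\in[p^m]^e}$ such that $r\mapsto\sum D_{\mathbf i}(r)\bar v^{\mathbf i}$ is a $k$-algebra homomorphism $R\to R[\bar v]$ with $D_{\mathbf 0}=\mathrm{id}$. For $F=(F_1,\dots,F_e)\in(k[\bar v,\bar w])^e$, it is an $F$-derivation if for all $r\in R$: $\sum_{\mathbf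 i,\mathbf j}D_{\mathbf j}(D_{\mathbf i}(r))\bar v^{\mathbf i}\bar w^{\mathbf j}=\sum_{\mathbf i}D_{\mathbf i}(r)F(\bar v,\bar w)^{\mathbf i}$, where $F^{\mathbf i}=F_1^{i_1}\cdots F_e^{i_e}$. *)

From HB Require Import structures.
From mathcomp Require Import all_boot all_order all_algebra.
Set Implicit Arguments. Unset Strict Implicit. Unset Printing Implicit Defensive.
Import Order.TTheory GRing.Theory Num.Theory.
Local Open Scope ring_scope.

Definition mi (e : nat) := {ffun 'I_e -> nat}.
Definition mi0 (e : nat) : mi e := [ffun => 0%N].
Definition unitv (e : nat) (l : 'I_e) (c : nat) : mi e :=
  [ffun l' => if l' == l then c else 0%N].
Definition misub (e : nat) (a j : mi e) : mi e := [ffun l => (a l - j l)%N].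
Definition mile (e : nat) (j a : mi e) : bool := [forall l, (j l <= a l)%N].
Definition miabs (e : nat) (a : mi e) : nat := (\sum_(l < e) a l)%N.
Definition mibound (e : nat) (a : mi e) : nat := (\max_(l < e) a l)%N.
Definition mival (e N : nat) (j : {ffun 'I_e -> 'I_N}) : mi e :=
  [ffun l => nat_of_ord (j l)].

Definition sum_below (V : nmodType) (e : nat) (a : mi e) (f : mi e -> V) : V :=
  \sum_(j : {ffun 'I_e -> 'I_(mibound a).+1} | mile (mival j) a) f (mival j).

(* Truncation level m in N_{>0} u {oo}: Some n = n, None = infinity. *)
Definition inrange (p : nat) (m : option nat) (e : nat) (a : mi e) : bool :=
  if m is Some n then [forall l, (a l < p ^ n)%N] else true.
Definition lt_m (i : nat) (m : option nat) : bool :=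
  if m is Some n then (i < n)%N else true.

(* Elements of k[v,w] (2e truncated variables) as coefficient functions:
   f a b = coefficient of v^a w^b. *)
Definition ser2 (k : Type) (e : nat) := mi e -> mi e -> k.

Definition one2 (k : nzRingType) (e : nat) : ser2 k e :=
  fun a b => if (a == mi0 e) && (b == mi0 e) then 1 else 0.

(* product in k[v,w] = k[X,Y]/(X^{p^m},Y^{p^m}) (power series if m = oo) *)
Definition mul2 (k : nzRingType) (p : nat) (m : option nat) (e : nat)
    (f g : ser2 k e) : ser2 k e :=
  fun a b => if inrange p m a && inrange p m b then
     sum_below a (fun a' => sum_below b (fun b' =>
        f a' b' * g (misub a a') (misub b b')))
   else 0.

Definition pow2 (k : nzRingType) (p : nat) (m : option nat) (e : nat)
    (f : ser2 k e) (n : nat) : ser2 k e :=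
  iter n (@mul2 k p m e f) (@one2 k e).

Definition Fpow (k : nzRingType) (p : nat) (m : option nat) (e : nat)
    (F : 'I_e -> ser2 k e) (i : mi e) : ser2 k e :=
  \big[@mul2 k p m e / @one2 k e]_(l < e) @pow2 k p m e (F l) (i l).

(* m-truncated e-dimensional HS-derivation over k on R, i.e. (D_i)_{i in [p^m]^e}
   such that r |-> sum_i D_i(r) v^i is a k-algebra hom R -> R[v] and D_0 = id;
   the hom condition is written out coefficientwise. *)
Definition HS_derivation (k : fieldType) (R : comAlgType k) (p : nat)
    (m : option nat) (e : nat) (D : mi e -> R -> R) : Prop :=
  [/\ forall r, D (mi0 e) r = r,
      forall a, inrange p m a -> forall (c : k) (x y : R),
        D a (c *: x + y) = c *: D a x + D a y,
      forall a, inrange p m a -> D a 1 = (if a == mi0 e then 1 else 0)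
    & forall a, inrange p m a -> forall x y : R,
        D a (x * y) = sum_below a (fun j => D j x * D (misub a j) y)].

(* F-derivation: sum_{i,j} D_j(D_i r) v^i w^j = sum_i D_i(r) F(v,w)^i,
   compared coefficient of v^a w^b for a, b in [p^m]^e.
   For finite m the sum on the right runs over all i in [p^m]^e.  For m = oo
   it is the (adically convergent, as F(0,0)=0) infinite sum; only indices i
   with all components <= |a|+|b| can contribute to the coefficient of v^a w^b
   when F(0,0) = 0, so we sum over those. *)
Definition F_derivation (k : fieldType) (R : comAlgType k) (p : nat)
    (m : option nat) (e : nat) (F : 'I_e -> ser2 k e) (D : mi e -> R -> R) : Prop :=
  @HS_derivation k R p m e D /\
  forall (r : R) (a b : mi e), inrange p m a -> inrange p m b ->
    D b (D a r) =
    sum_below [ffun => if m is Some n then (p ^ n).-1 else (miabs a + miabs b)%N]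
      (fun i => if inrange p m i then @Fpow k p m e F i a b *: D i r else 0).

From HB Require Import structures.
From mathcomp Require Import all_boot all_order all_algebra zify.
Import Order.TTheory GRing.Theory Num.Theory.
Set Implicit Arguments. Unset Strict Implicit. Unset Printing Implicit Defensive.
Local Open Scope ring_scope.

(* Since F(v, w) = v + w + (terms of total degree >= 2), the lowest homogeneous
   part of F(v, w)^i is (v + w)^i, of degree |i|.  Comparing the coefficients of
   v^a' w^b' in the defining identity of an F-derivation therefore gives
     D_b' (D_a' r) = C(a, a') D_a r + (terms D_i r with |i| < |a|),   a = a' + b',
   where C(a, a') = \prod_l C(a_l, a'_l).  By induction on |a|,
   D_a = D'_a as soon as a splits as a' + b' with a', b' nonzero and C(a, a') a
   unit of k.  Such a splitting exists unless a is 0 or of the form p^i eps_l: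
   split off one coordinate when a has two nonzero ones, and otherwise use
   C(p^s u, p^s) = u (mod p) for p not dividing u > 1. *)

Lemma coef_XaddC1_exp (k : nzRingType) n j :
  (('X + 1) ^+ n : {poly k})`_j = 'C(n, j)%:R.
Proof.
rewrite exprD1n coef_sum.
under eq_bigr do rewrite coefMn coefXn.
case: (ltnP j n.+1) => hj.
  rewrite (bigD1 (Ordinal hj)) //= eqxx mulr1n big1 ?addr0 //.
  move=> i hi; case: eqP => [hji|]; last by rewrite mul0rn.
  by case/eqP: hi; apply: val_inj; rewrite /= hji.
rewrite bin_small // big1 // => i _.
case: eqP => [hji|]; last by rewrite mul0rn.
by move: (ltn_ord i); rewrite -hji ltnNge hj.
Qed.

(* In characteristic p, ('X + 1)^(p^s u) = ('X^(p^s) + 1)^u, whose coefficient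
   of 'X^(p^s) is u. *)
Lemma pchar_bin_pfactor_neq0 (k : fieldType) p s u : p \in [pchar k] ->
  ~~ (p %| u)%N -> 'C(p ^ s * u, p ^ s)%:R != 0 :> k.
Proof.
move=> hp hu.
have pr := pcharf_prime hp.
have hq : (0 < p ^ s)%N by rewrite expn_gt0 prime_gt0.
have hpp : p \in [pchar {poly k}] by rewrite pchar_poly.
have Frob : (('X + 1) ^+ (p ^ s * u) : {poly k}) =
            \sum_(i < u.+1) 'X^(p ^ s * i) *+ 'C(u, i).
  rewrite exprM exprDn_pchar; last first.
    apply: (@sub_in_pnat (pred1 p)); last by rewrite pnatX pnat_id.
    by move=> q _ /eqP ->.
  by rewrite expr1n exprD1n; apply: eq_bigr => i _; rewrite -exprM.
have hu1 : (1 < u.+1)%N by move: hu; case: (u) => //; rewrite dvdn0.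
rewrite -coef_XaddC1_exp Frob coef_sum.
under eq_bigr do rewrite coefMn coefXn.
rewrite (bigD1 (Ordinal hu1)) //= muln1 eqxx mulr1n bin1 big1 ?addr0.
  by rewrite -(dvdn_pcharf hp).
move=> i hi; case: eqP => [hji|]; last by rewrite mul0rn.
case/eqP: hi; apply: val_inj => /=.
by apply/eqP; rewrite -(eqn_pmul2l hq) muln1 -hji.
Qed.

Section MultiIndex.
Variable e : nat.
Implicit Types a b j x y : mi e.

Definition miadd x y : mi e := [ffun l => (x l + y l)%N].

Lemma mileP j a : reflect (forall l, (j l <= a l)%N) (mile j a).
Proof. exact: forallP. Qed.

Lemma mile_misub j a : mile (misub a j) a.
Proof. by apply/mileP => l; rewrite ffunE leq_subr. Qed.

Lemma mile_miaddr x y : mile x (miadd x y).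
Proof. by apply/mileP => l; rewrite ffunE leq_addr. Qed.

Lemma mile_miaddl x y : mile y (miadd x y).
Proof. by apply/mileP => l; rewrite ffunE leq_addl. Qed.

Lemma miadd_misub j a : mile j a -> miadd j (misub a j) = a.
Proof. by move/mileP=> h; apply/ffunP => l; rewrite !ffunE subnKC. Qed.

Lemma miadd_unitv (l : 'I_e) c1 c2 : miadd (unitv l c1) (unitv l c2) = unitv l (c1 + c2).
Proof. by apply/ffunP => l0; rewrite !ffunE; case: eqP. Qed.

Lemma unitv0 (l : 'I_e) : unitv l 0 = mi0 e.
Proof. by apply/ffunP => l0; rewrite !ffunE; case: eqP. Qed.

Lemma mile_mibound j a : mile j a -> forall l, (j l <= mibound a)%N.
Proof. by move/mileP=> h l; apply: leq_trans (h l) (leq_bigmax l). Qed.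

Lemma leq_miabs a l : (a l <= miabs a)%N.
Proof. by rewrite /miabs (bigD1 l) //= leq_addr. Qed.

Lemma miabs_eq0 a : miabs a = 0%N -> a = mi0 e.
Proof.
move=> /eqP; rewrite sum_nat_eq0 => /forallP h; apply/ffunP => l.
by rewrite ffunE; apply/eqP; exact: h.
Qed.

Lemma miabs_mi0 : miabs (mi0 e) = 0%N.
Proof. by rewrite /miabs big1 // => l _; rewrite ffunE. Qed.

Lemma miabs_unitv (l : 'I_e) c : miabs (unitv l c) = c.
Proof.
rewrite /miabs (bigD1 l) //= big1 ?addn0 ?ffunE ?eqxx // => l' hl.
by rewrite ffunE (negbTE hl).
Qed.

Lemma miabs_miadd x y : miabs (miadd x y) = (miabs x + miabs y)%N.
Proof. by rewrite /miabs -big_split; apply: eq_bigr => l _; rewrite ffunE. Qed.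

Lemma miabs_misub j a : mile j a -> (miabs j + miabs (misub a j))%N = miabs a.
Proof. by move=> h; rewrite -miabs_miadd miadd_misub. Qed.

Definition mi_index a j : {ffun 'I_e -> 'I_(mibound a).+1} :=
  [ffun l => inord (j l)].

Lemma mival_index a j : mile j a -> mival (mi_index a j) = j.
Proof.
move=> h; apply/ffunP => l; rewrite !ffunE inordK //.
by rewrite ltnS; apply: mile_mibound.
Qed.

Section SumBelow.
Variable V : nmodType.

Lemma eq_sum_below a (f g : mi e -> V) :
  (forall j, mile j a -> f j = g j) -> sum_below a f = sum_below a g.
Proof. by move=> h; apply: eq_bigr => J hJ; apply: h. Qed.

Lemma sum_below_eq0 a (f : mi e -> V) :
  (forall j, mile j a -> f j = 0) -> sum_below a f = 0.
Proof. by move=> h; apply: big1 => J hJ; apply: h. Qed.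

Lemma sum_below_single a j0 (f : mi e -> V) :
  (forall j, mile j a -> j != j0 -> f j = 0) ->
  sum_below a f = if mile j0 a then f j0 else 0.
Proof.
move=> h; case hj0: (mile j0 a).
  rewrite /sum_below (bigD1 (mi_index a j0)) /=; last by rewrite mival_index.
  rewrite mival_index // big1 ?addr0 // => J /andP[hJ hne]; apply: h => //.
  apply: contra hne => /eqP he; apply/eqP/ffunP => l; apply: val_inj.
  by rewrite /= ffunE -he ffunE inordK // ltn_ord.
apply: sum_below_eq0 => j hj; apply: h => //.
by apply: contraFN hj0 => /eqP <-.
Qed.
End SumBelow.

Lemma sum_belowB (V : zmodType) a (f g : mi e -> V) :
  sum_below a f - sum_below a g = sum_below a (fun j => f j - g j).
Proof. by rewrite /sum_below sumrB. Qed.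

Lemma sum_below_prod (k : comNzRingType) a (G : 'I_e -> nat -> k) :
  sum_below a (fun j => \prod_(l < e) G l (j l)) =
  \prod_(l < e) \sum_(i < (a l).+1) G l i.
Proof.
rewrite /sum_below big_mkcond /=.
transitivity (\sum_(J : {ffun 'I_e -> 'I_(mibound a).+1})
                \prod_(l < e) (if (J l <= a l)%N then G l (J l) else 0)).
  apply: eq_bigr => J _; case: ifP => hJ.
    by apply: eq_bigr => l _; have := mileP _ _ hJ l; rewrite ffunE => ->.
  move/negbT: hJ => /forallPn [l]; rewrite ffunE => hl.
  by rewrite (bigD1 l) //= (negbTE hl) mul0r.
rewrite -(bigA_distr_bigA (fun l (i : 'I_(mibound a).+1) =>
            if (i <= a l)%N then G l i else 0)).
apply: eq_bigr => l _; rewrite -big_mkcond /=.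
rewrite (@big_ord_widen _ _ _ (a l).+1 (mibound a).+1 (fun i => G l i)); last first.
  by rewrite ltnS (leq_bigmax l).
by apply: eq_bigl => i; rewrite ltnS.
Qed.
End MultiIndex.

Section InitialForm.
Variables (k : fieldType) (p : nat) (m : option nat) (e : nat).
Local Notation ir := (inrange p m).

Lemma inrange_mile (j a : mi e) : mile j a -> ir a -> ir j.
Proof.
rewrite /inrange; case: m => // n /mileP h /forallP ha; apply/forallP => l.
exact: leq_ltn_trans (h l) (ha l).
Qed.

Definition initial_form (f : ser2 k e) d (c : ser2 k e) := forall a b, ir a -> ir b ->
  (miabs a + miabs b <= d)%N ->
  f a b = if (miabs a + miabs b == d)%N then c a b else 0.

Definition mul_initial d (c1 c2 : ser2 k e) : ser2 k e := fun a b =>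
  sum_below a (fun a' => sum_below b (fun b' =>
    if (miabs a' + miabs b' == d)%N then c1 a' b' * c2 (misub a a') (misub b b')
    else 0)).

Lemma eq_initial_form f d c c' : initial_form f d c ->
  (forall a b, ir a -> ir b -> (miabs a + miabs b)%N = d -> c a b = c' a b) ->
  initial_form f d c'.
Proof. by move=> h hc a b ha hb hab; rewrite h //; case: eqP => // /hc ->. Qed.

Lemma initial_form_mul f g d1 d2 c1 c2 :
  initial_form f d1 c1 -> initial_form g d2 c2 ->
  initial_form (mul2 p m f g) (d1 + d2) (mul_initial d1 c1 c2).
Proof.
move=> hf hg a b ha hb hab; rewrite /mul2 ha hb /=.
have term a' b' : mile a' a -> mile b' b ->
    f a' b' * g (misub a a') (misub b b') =
    if (miabs a + miabs b == d1 + d2)%N then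
      (if (miabs a' + miabs b' == d1)%N
       then c1 a' b' * c2 (misub a a') (misub b b') else 0)
    else 0.
  move=> ha' hb'.
  have e1 := miabs_misub ha'; have e2 := miabs_misub hb'.
  have ia' := inrange_mile ha' ha; have ib' := inrange_mile hb' hb.
  have ia'' := inrange_mile (mile_misub a' a) ha.
  have ib'' := inrange_mile (mile_misub b' b) hb.
  case: (leqP (miabs a' + miabs b') d1) => h1.
    rewrite hf //; case: eqP => h1e; last by rewrite mul0r; case: ifP.
    rewrite hg //; last by lia.
    have -> : (miabs (misub a a') + miabs (misub b b') == d2)%N =
              (miabs a + miabs b == d1 + d2)%N by apply/eqP/eqP; lia.
    by case: ifP => _ //; rewrite mulr0.
  rewrite (hg _ _ ia'' ib''); last by lia.
  case: eqP; first by lia.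
  by move=> _; rewrite mulr0; case: ifP => // _; case: eqP => // h; exfalso; lia.
case: eqP => hE.
  apply: eq_sum_below => a' ha'; apply: eq_sum_below => b' hb'.
  by rewrite term // hE eqxx.
apply: sum_below_eq0 => a' ha'; apply: sum_below_eq0 => b' hb'.
by rewrite term //; case: eqP.
Qed.
End InitialForm.

Section BinomialSeries.
Variables (k : fieldType) (e : nat).
Implicit Types a b x y : mi e.

(* The coefficients of (v + w)^x = \prod_l (v_l + w_l)^(x_l). *)
Definition binom_ser x : ser2 k e := fun a b =>
  if [forall l, (a l + b l == x l)%N] then \prod_(l < e) ('C(x l, a l))%:R else 0.

Lemma binom_ser_miadd a b :
  binom_ser (miadd a b) a b = \prod_(l < e) ('C(a l + b l, a l))%:R.
Proof.
rewrite /binom_ser; have -> : [forall l, (a l + b l == miadd a b l)%N].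
  by apply/forallP => l; rewrite ffunE.
by apply: eq_bigr => l _; rewrite ffunE.
Qed.

Lemma binom_ser_out x a b : miadd a b != x -> binom_ser x a b = 0.
Proof.
rewrite /binom_ser => hne; case: forallP => // h.
by case/eqP: hne; apply/ffunP => l; rewrite ffunE; exact/eqP/h.
Qed.

Lemma binom_ser_mi0r x a : binom_ser x a (mi0 e) = (a == x)%:R.
Proof.
have a0 : miadd a (mi0 e) = a by apply/ffunP => l; rewrite !ffunE addn0.
case: eqP => [<-|/eqP hne]; last by rewrite binom_ser_out // a0.
by rewrite -{1}a0 binom_ser_miadd big1 // => l _; rewrite ffunE addn0 binn.
Qed.

Lemma binom_ser_mi0l x b : binom_ser x (mi0 e) b = (b == x)%:R.
Proof.
have b0 : miadd (mi0 e) b = b by apply/ffunP => l; rewrite !ffunE.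
case: eqP => [<-|/eqP hne]; last by rewrite binom_ser_out // b0.
by rewrite -{1}b0 binom_ser_miadd big1 // => l _; rewrite ffunE bin0.
Qed.

Lemma mul_initial_binom_serE x (c : ser2 k e) a b :
  mul_initial (miabs x) (binom_ser x) c a b =
  sum_below a (fun a' => sum_below b (fun b' =>
    binom_ser x a' b' * c (misub a a') (misub b b'))).
Proof.
apply: eq_sum_below => a' _; apply: eq_sum_below => b' _.
case: (eqVneq (miadd a' b') x) => [<-|hne]; first by rewrite miabs_miadd eqxx.
by rewrite binom_ser_out // mul0r; case: ifP.
Qed.

Lemma sum_below_binom_ser_mul x y a b a' : mile a' a ->
  sum_below b (fun b' => binom_ser x a' b' * binom_ser y (misub a a') (misub b b')) =
  if [forall l, (a l + b l == x l + y l)%N]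
  then \prod_(l < e) ('C(x l, a' l) * 'C(y l, a l - a' l))%:R else 0.
Proof.
move=> /mileP ha'.
have prod0 l : ('C(x l, a' l) * 'C(y l, a l - a' l))%:R = 0 :> k ->
    \prod_(l0 < e) ('C(x l0, a' l0) * 'C(y l0, a l0 - a' l0))%:R = 0 :> k.
  by move=> h; rewrite (bigD1 l) //= h mul0r.
rewrite (sum_below_single (j0 := misub x a')); last first.
  move=> b' _ hne; rewrite binom_ser_out ?mul0r //.
  apply: contra hne => /eqP hx; apply/eqP/ffunP => l.
  by rewrite -hx !ffunE addKn.
case hx: (mile a' x); last first.
  move/negbT: hx => /forallPn [l hl].
  rewrite binom_ser_out ?mul0r ?if_same; last first.
    by apply/eqP => /(congr1 (fun f : mi e => f l)); rewrite !ffunE; lia.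
  by case: ifP => // _; rewrite (prod0 l) // bin_small ?mul0n // ltnNge.
case hb: (mile (misub x a') b); last first.
  move/negbT: hb => /forallPn [l]; rewrite ffunE => hl.
  case: ifP => // /forallP /(_ l) /eqP hsum.
  rewrite (prod0 l) // (bin_small (n := y l)) ?muln0 //.
  by have := ha' l; have := mileP _ _ hx l; lia.
rewrite -{1}(miadd_misub hx) binom_ser_miadd /binom_ser.
have -> : [forall l, (misub a a' l + misub b (misub x a') l == y l)%N] =
          [forall l, (a l + b l == x l + y l)%N].
  apply: eq_forallb => l; rewrite !ffunE.
  have := ha' l; have := mileP _ _ hb l; have := mileP _ _ hx l.
  rewrite ffunE => h1 h2 h3; apply/eqP/eqP; lia.
case: ifP => _; last by rewrite mulr0.
by rewrite -big_split; apply: eq_bigr => l _; rewrite !ffunE subnKC ?natrM ?(mileP _ _ hx l).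
Qed.

(* Vandermonde's identity, coordinatewise. *)
Lemma mul_initial_binom_ser x y :
  mul_initial (miabs x) (binom_ser x) (binom_ser y) =2 binom_ser (miadd x y).
Proof.
move=> a b; rewrite mul_initial_binom_serE.
rewrite (eq_sum_below (g := fun a' => if [forall l, (a l + b l == x l + y l)%N]
   then \prod_(l < e) ('C(x l, a' l) * 'C(y l, a l - a' l))%:R else 0)); last first.
  by move=> a' ha'; rewrite sum_below_binom_ser_mul.
rewrite /binom_ser.
have -> : [forall l, (a l + b l == miadd x y l)%N] =
          [forall l, (a l + b l == x l + y l)%N].
  by apply: eq_forallb => l; rewrite ffunE.
case: ifP => _; last exact: sum_below_eq0.
rewrite (sum_below_prod a (fun l i => ('C(x l, i) * 'C(y l, a l - i))%:R)).
apply: eq_bigr => l _.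
by rewrite ffunE -(binomial.Vandermonde (x l) (y l) (a l)) natr_sum.
Qed.

Definition split_nontrivial a b :=
  [/\ (0 < miabs a)%N, (0 < miabs b)%N & binom_ser (miadd a b) a b != 0].
End BinomialSeries.

Section InitialFormFpow.
Variables (k : fieldType) (p : nat) (m : option nat) (e : nat).
Variable F : 'I_e -> ser2 k e.
Hypothesis HFv : forall (l : 'I_e) (a : mi e), inrange p m a ->
  F l a (mi0 e) = (a == unitv l 1)%:R.
Hypothesis HFw : forall (l : 'I_e) (b : mi e), inrange p m b ->
  F l (mi0 e) b = (b == unitv l 1)%:R.

Lemma initial_form_one2 : initial_form p m (@one2 k e) 0 (binom_ser k (mi0 e)).
Proof.
move=> a b _ _ hab.
have /miabs_eq0 -> : miabs a = 0%N by lia.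
have /miabs_eq0 -> : miabs b = 0%N by lia.
by rewrite /one2 eqxx miabs_mi0 binom_ser_mi0r eqxx.
Qed.

Lemma initial_form_F l : initial_form p m (F l) 1 (binom_ser k (unitv l 1)).
Proof.
move=> a b ha hb hab.
have [/miabs_eq0 ->|/miabs_eq0 ->] : miabs b = 0%N \/ miabs a = 0%N by lia.
  rewrite HFv // binom_ser_mi0r miabs_mi0 addn0.
  by case: eqP => [->|_]; rewrite ?miabs_unitv ?eqxx // if_same.
rewrite HFw // binom_ser_mi0l miabs_mi0 add0n.
by case: eqP => [->|_]; rewrite ?miabs_unitv ?eqxx // if_same.
Qed.

Lemma initial_form_pow2 l n :
  initial_form p m (pow2 p m (F l) n) n (binom_ser k (unitv l n)).
Proof.
elim: n => [|n IH]; first by rewrite unitv0; exact: initial_form_one2.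
have := initial_form_mul (initial_form_F l) IH; rewrite add1n => h.
apply: (eq_initial_form h) => a b _ _ _.
by rewrite -{1}(miabs_unitv l 1) mul_initial_binom_ser miadd_unitv add1n.
Qed.

Lemma initial_form_big (i : mi e) (r : seq 'I_e) : uniq r ->
  initial_form p m (\big[@mul2 k p m e / @one2 k e]_(l <- r) pow2 p m (F l) (i l))
    (\sum_(l <- r) i l)%N (binom_ser k [ffun l => if l \in r then i l else 0%N]).
Proof.
elim: r => [|l r IH] /=.
  move=> _; rewrite !big_nil.
  have -> : [ffun l => if l \in [::] then i l else 0%N] = mi0 e.
    by apply/ffunP => l; rewrite !ffunE.
  exact: initial_form_one2.
case/andP => hl hu; rewrite !big_cons.
have := initial_form_mul (initial_form_pow2 l (n := i l)) (IH hu) => h.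
apply: (eq_initial_form h) => a b _ _ _.
rewrite -{1}(miabs_unitv l (i l)) mul_initial_binom_ser; congr binom_ser.
apply/ffunP => l0; rewrite !ffunE in_cons; case: eqP => [->|_] /=; last first.
  by rewrite add0n.
by rewrite (negbTE hl) addn0.
Qed.

Lemma initial_form_Fpow (i : mi e) :
  initial_form p m (Fpow p m F i) (miabs i) (binom_ser k i).
Proof.
have := initial_form_big (i := i) (index_enum_uniq 'I_e).
have -> // : [ffun l => if l \in index_enum 'I_e then i l else 0%N] = i.
by apply/ffunP => l; rewrite ffunE mem_index_enum.
Qed.
End InitialFormFpow.

Section Splitting.
Variables (k : fieldType) (p : nat) (e : nat).
Hypothesis pchar_p : p \in [pchar k].
Local Open Scope nat_scope.

Lemma split_nontrivial_coord (a : mi e) (l l' : 'I_e) : l' != l ->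
  (0 < a l)%N -> (0 < a l')%N ->
  split_nontrivial k (unitv l (a l)) (misub a (unitv l (a l))).
Proof.
move=> hl' hpos hpos'; split.
- by rewrite miabs_unitv.
- by apply: leq_trans (leq_miabs _ l'); rewrite !ffunE (negbTE hl') subn0.
rewrite binom_ser_miadd big1 ?oner_neq0 // => l0 _; rewrite !ffunE.
by case: eqP => [->|_]; rewrite ?subnn ?addn0 ?binn ?subn0 ?add0n ?bin0.
Qed.

Lemma split_nontrivial_pfactor (l : 'I_e) c : (0 < c)%N ->
  c != (p ^ logn p c)%N ->
  split_nontrivial k (unitv l (c - p ^ logn p c)) (unitv l (p ^ logn p c)).
Proof.
move=> c_gt0 c_neq; have pr := pcharf_prime pchar_p.
have [u hu cE] := pfactor_coprime pr c_gt0; set s := logn p c in c_neq cE *.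
have s_gt0 : (0 < p ^ s)%N by rewrite expn_gt0 prime_gt0.
have u_gt1 : (1 < u)%N.
  by move: c_gt0 c_neq; rewrite cE; case: u {hu cE} => [|[|]] //; rewrite mul1n eqxx.
have lt_c : (p ^ s < c)%N by rewrite cE -{1}(mul1n (p ^ s)) ltn_pmul2r.
split; rewrite ?miabs_unitv ?subn_gt0 //.
rewrite binom_ser_miadd (bigD1 l) //= big1 ?mulr1; last first.
  by move=> l0 hl0; rewrite !ffunE (negbTE hl0) bin0.
rewrite !ffunE eqxx subnK ?(ltnW lt_c) // bin_sub ?(ltnW lt_c) // cE mulnC.
by apply: pchar_bin_pfactor_neq0; rewrite // -prime_coprime.
Qed.

Lemma mi_pfactor_unitv_or_split (m : option nat) (a : mi e) :
  inrange p m a -> a != mi0 e ->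
  (exists l i, lt_m i m /\ a = unitv l (p ^ i)) \/
  exists a' b', a = miadd a' b' /\ split_nontrivial k a' b'.
Proof.
move=> ha a0; have pr := pcharf_prime pchar_p.
have [l hl] : exists l, (0 < a l)%N.
  apply/existsP; apply: contraR a0 => /existsPn h; apply/eqP/ffunP => l.
  by have := h l; rewrite ffunE lt0n negbK => /eqP.
case: (pickP (fun l' => (l' != l) && (0 < a l')%N)) => [l' /andP[hl' hpos] | hnone].
  right; exists (unitv l (a l)), (misub a (unitv l (a l))).
  split; last exact: split_nontrivial_coord hl' hl hpos.
  by rewrite miadd_misub //; apply/mileP => l0; rewrite ffunE; case: eqP => [->|].
have aE : a = unitv l (a l).
  apply/ffunP => l0; rewrite ffunE; case: (l0 =P l) => [->//|/eqP hne].
  by have := hnone l0; rewrite hne /=; case: (a l0).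
case: (eqVneq (a l) (p ^ logn p (a l))%N) => [hpow|hpow].
  left; exists l, (logn p (a l)); split; last by rewrite -hpow.
  move: ha; rewrite aE /inrange /lt_m; case: m => [n /forallP /(_ l)|] //.
  by rewrite ffunE eqxx {1}hpow ltn_exp2l ?prime_gt1.
right; exists (unitv l (a l - p ^ logn p (a l))), (unitv l (p ^ logn p (a l))).
split; last exact: split_nontrivial_pfactor.
by rewrite miadd_unitv subnK -?aE // dvdn_leq // pfactor_dvdnn.
Qed.
End Splitting.

Section Uniqueness.
Variables (k : fieldType) (p : nat) (e : nat) (m : option nat).
Variables (R : comAlgType k) (F : 'I_e -> ser2 k e).
Hypothesis HFv : forall (l : 'I_e) (a : mi e), inrange p m a ->
  F l a (mi0 e) = (a == unitv l 1)%:R.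
Hypothesis HFw : forall (l : 'I_e) (b : mi e), inrange p m b ->
  F l (mi0 e) b = (b == unitv l 1)%:R.
Variables (D D' : mi e -> R -> R).
Hypotheses (hD : F_derivation p m F D) (hD' : F_derivation p m F D').

Lemma F_derivation_eq_miadd (a' b' : mi e) : inrange p m (miadd a' b') ->
  (forall j, inrange p m j -> (miabs j < miabs (miadd a' b'))%N ->
     forall r, D j r = D' j r) ->
  split_nontrivial k a' b' -> forall r, D (miadd a' b') r = D' (miadd a' b') r.
Proof.
move=> ha IH [a'_gt0 b'_gt0 hC] r.
have ia' := inrange_mile (mile_miaddr a' b') ha.
have ib' := inrange_mile (mile_miaddl a' b') ha.
have habs := miabs_miadd a' b'.
move: ha IH hC habs; move aE: (miadd a' b') => a ha IH hC habs.
have E : D b' (D a' r) = D' b' (D' a' r) by rewrite (IH a') ?(IH b') //; lia.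
case: hD => _ /(_ r a' b' ia' ib') hDr.
case: hD' => _ /(_ r a' b' ia' ib') hD'r.
move/eqP: E; rewrite hDr hD'r -subr_eq0 sum_belowB (sum_below_single (j0 := a)); last first.
  move=> i _ hne; case hi: (inrange p m i); last by rewrite subrr.
  case: (ltnP (miabs i) (miabs a)) => hia; first by rewrite (IH i) // subrr.
  rewrite (initial_form_Fpow HFv HFw ia' ib') -?habs //.
  case: eqP => _; last by rewrite !scale0r subrr.
  by rewrite binom_ser_out ?scale0r ?subrr // aE eq_sym.
rewrite ha (initial_form_Fpow HFv HFw ia' ib') -habs // eqxx -scalerBr.
have -> : mile a [ffun=> if m is Some n then (p ^ n).-1 else miabs a].
  apply/mileP => l; rewrite ffunE; move: ha; rewrite /inrange.
  case: m => [n /forallP /(_ l) hl | _]; first by lia.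
  by rewrite leq_miabs.
by rewrite scaler_eq0 (negbTE hC) /= subr_eq0 => /eqP.
Qed.
End Uniqueness.

Unset Implicit Arguments.

Theorem fact2p14 (k : fieldType) (p : nat) (hp : p \in [pchar k])
  (e : nat) (he : (0 < e)%N) (m : option nat)
  (hm : forall n, m = Some n -> (0 < n)%N)
  (R : comAlgType k) (F : 'I_e -> ser2 k e)
  (HFv : forall (l : 'I_e) (a : mi e), inrange p m a ->
           F l a (mi0 e) = (a == unitv l 1)%:R)
  (HFw : forall (l : 'I_e) (b : mi e), inrange p m b ->
           F l (mi0 e) b = (b == unitv l 1)%:R)
  (D D' : mi e -> R -> R)
  (hD : F_derivation p m F D) (hD' : F_derivation p m F D')
  (Heq : forall (l : 'I_e) (i : nat), lt_m i m ->
           forall r : R, D (unitv l (p ^ i)) r = D' (unitv l (p ^ i)) r) :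
  forall a : mi e, inrange p m a -> forall r : R, D a r = D' a r.
Proof.
suff main n (a : mi e) : (miabs a < n)%N -> inrange p m a ->
    forall r, D a r = D' a r.
  by move=> a; apply: main (ltnSn _).
elim: n a => // n IHn a han ha r.
have [->|a0] := eqVneq a (mi0 e).
  by case: hD => [[-> _ _ _] _]; case: hD' => [[-> _ _ _] _].
case: (mi_pfactor_unitv_or_split hp ha a0) => [[l [i [hi ->]]]|[a' [b' [aE hsplit]]]].
  exact: Heq.
move: ha han; rewrite aE => ha han.
apply: (F_derivation_eq_miadd HFv HFw hD hD' ha _ hsplit) => j hj hja.
by apply: IHn => //; lia.
Qed.
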